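(* Let $J$ be a non-degenerate interval and $f_{1,\infty}$ a commutative $m$-periodic sequence of continuous surjective self-maps of $J$. If $(J,f_{1,\infty})$ is weakly mixing, then $(J,f_{1,\infty})$ is Devaney chaotic.
   Context: Commutative: $f_i\circ f_j=f_j\circ f_i$ for all $i,j$. $m$-periodic: $f_{n+m}=f_n$ for all $n$. Write $f_1^n=f_n\circ\cdots\circ f_1$. Weakly mixing: for all non-empty open $U_1,U_2,V_1,V_2$ there is $n$ with $f_1^n(U_i)\cap V_i\ne\emptyset$, $i=1,2$. Topologically transitive: for all non-empty open $U,V$ some $n$ with $f_1^n(U)\cap V\ne\emptyset$. A point $x$ is periodic if there is $n$ with $f_1^{nk}(x)=x$ for every $k\in\mathbb{N}$. Sensitive: there is $\delta>0$ such that for every $x$ and every neighbourhood $U$ of $x$ there are $y\in U$, $n\in\mathbb{N}$ with $|f_1^n(x)-f_1^n(y)|>\delta$. Devaney chaotic: topologically transitive, dense set of periodic points, and sensitive. *)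

From Stdlib Require Import Reals Lra Lia.
Open Scope R_scope.

Definition is_interval (J : R -> Prop) : Prop :=
  forall x y z, J x -> J y -> x <= z <= y -> J z.

Definition nondegenerate_interval (J : R -> Prop) : Prop :=
  is_interval J /\ exists a b, J a /\ J b /\ a < b.

Definition continuous_on (J : R -> Prop) (g : R -> R) : Prop :=
  forall x, J x -> forall eps, 0 < eps ->
    exists delta, 0 < delta /\
      forall y, J y -> Rabs (y - x) < delta -> Rabs (g y - g x) < eps.

Definition cont_surj_self_map (J : R -> Prop) (g : R -> R) : Prop :=
  (forall x, J x -> J (g x)) /\ continuous_on J g /\
  (forall y, J y -> exists x, J x /\ g x = y).

(* The sequence f_{1,oo} is indexed by f 1, f 2, ...; f 0 is unused. *)
Definition commutative_seq (J : R -> Prop) (f : nat -> R -> R) : Prop :=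
  forall i j, (1 <= i)%nat -> (1 <= j)%nat ->
    forall x, J x -> f i (f j x) = f j (f i x).

Definition periodic_seq (J : R -> Prop) (f : nat -> R -> R) (m : nat) : Prop :=
  (1 <= m)%nat /\ forall n, (1 <= n)%nat -> forall x, J x -> f (n + m)%nat x = f n x.

(* f_1^n = f_n o ... o f_1 ; f_1^0 = id. *)
Fixpoint comp (f : nat -> R -> R) (n : nat) (x : R) : R :=
  match n with
  | O => x
  | S k => f (S k) (comp f k x)
  end.

Definition open_in (J : R -> Prop) (U : R -> Prop) : Prop :=
  (forall x, U x -> J x) /\
  forall x, U x -> exists eps, 0 < eps /\ forall y, J y -> Rabs (y - x) < eps -> U y.

Definition nonempty_open_in (J U : R -> Prop) : Prop :=
  open_in J U /\ exists x, U x.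

Definition hits (f : nat -> R -> R) (n : nat) (U V : R -> Prop) : Prop :=
  exists x, U x /\ V (comp f n x).

Definition weakly_mixing (J : R -> Prop) (f : nat -> R -> R) : Prop :=
  forall U1 U2 V1 V2, nonempty_open_in J U1 -> nonempty_open_in J U2 ->
    nonempty_open_in J V1 -> nonempty_open_in J V2 ->
    exists n, (1 <= n)%nat /\ hits f n U1 V1 /\ hits f n U2 V2.

Definition top_transitive (J : R -> Prop) (f : nat -> R -> R) : Prop :=
  forall U V, nonempty_open_in J U -> nonempty_open_in J V ->
    exists n, (1 <= n)%nat /\ hits f n U V.

Definition periodic_point (J : R -> Prop) (f : nat -> R -> R) (x : R) : Prop :=
  J x /\ exists n, (1 <= n)%nat /\ forall k, (1 <= k)%nat -> comp f (n * k) x = x.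

Definition dense_periodic_points (J : R -> Prop) (f : nat -> R -> R) : Prop :=
  forall U, nonempty_open_in J U -> exists x, U x /\ periodic_point J f x.

Definition nbhd_in (J : R -> Prop) (x : R) (U : R -> Prop) : Prop :=
  (forall y, U y -> J y) /\ exists W, open_in J W /\ W x /\ forall y, W y -> U y.

Definition sensitive (J : R -> Prop) (f : nat -> R -> R) : Prop :=
  exists delta, 0 < delta /\
    forall x, J x -> forall U, nbhd_in J x U ->
      exists y n, U y /\ (1 <= n)%nat /\ Rabs (comp f n x - comp f n y) > delta.

Definition devaney_chaotic (J : R -> Prop) (f : nat -> R -> R) : Prop :=
  top_transitive J f /\ dense_periodic_points J f /\ sensitive J f.

(* Transitivity is immediate, and sensitivity holds because weak mixing sends
   every neighbourhood close to two fixed distant points of J at a common time.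
   For a periodic point inside an interval p1 < p2 < p3 < p4 of an open set,
   note that by periodicity only m compositions f_N o ... o f_(n+1) are needed
   to extend an iterate f_1^n to the next multiple N of m.  Pick preimages of
   p1 and p4 under each of them in one compact box inside J; weak mixing gives
   points of (p2, p3) sent by f_1^n below and above the box, and the
   intermediate value theorem then gives points of (p2, p3) sent by f_1^N to
   p1 and to p4, hence a fixed point of f_1^N between them.  Since N is a
   multiple of m, f_1^(N k) = (f_1^N)^k, so this point is periodic. *)

From Stdlib Require Import Reals Lra Lia.
Open Scope R_scope.

Ltac case_min_max :=
  unfold Rmin, Rmax in *;
  repeat match goal with
  | |- context [Rle_dec ?a ?b] => destruct (Rle_dec a b)
  | H : context [Rle_dec ?a ?b] |- _ => destruct (Rle_dec a b)
  end.

Lemma is_interval_between (J : R -> Prop) (x y z : R) :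
  is_interval J -> J x -> J y -> Rmin x y <= z <= Rmax x y -> J z.
Proof.
  intros HI Jx Jy Hz. case_min_max; [apply (HI x y) | apply (HI y x)]; auto.
Qed.

Lemma Rmin_Rmax_between (a b x y z : R) :
  a < x < b -> a < y < b -> Rmin x y <= z <= Rmax x y -> a < z < b.
Proof. intros; case_min_max; lra. Qed.

Lemma open_in_interval (J : R -> Prop) (lo hi : R) :
  open_in J (fun y => J y /\ lo < y < hi).
Proof.
  split; [now intros y []|].
  intros x [Jx Hx]. exists (Rmin (x - lo) (hi - x)).
  split; [apply Rmin_pos; lra|].
  intros y Jy Hxy. apply Rabs_def2 in Hxy.
  pose proof (Rmin_l (x - lo) (hi - x)). pose proof (Rmin_r (x - lo) (hi - x)).
  split; [exact Jy | lra].
Qed.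

Lemma nonempty_open_in_interval (J : R -> Prop) (lo hi x : R) :
  J x -> lo < x < hi -> nonempty_open_in J (fun y => J y /\ lo < y < hi).
Proof. split; [apply open_in_interval | exists x; auto]. Qed.

Lemma continuous_on_id (J : R -> Prop) : continuous_on J (fun x => x).
Proof. intros x _ eps Heps. exists eps; auto. Qed.

Lemma continuous_on_comp (J : R -> Prop) (g h : R -> R) :
  continuous_on J g -> continuous_on J h -> (forall x, J x -> J (h x)) ->
  continuous_on J (fun x => g (h x)).
Proof.
  intros Hg Hh HJ x Jx eps Heps.
  destruct (Hg (h x) (HJ x Jx) eps Heps) as [d1 [Hd1 H1]].
  destruct (Hh x Jx d1 Hd1) as [d2 [Hd2 H2]].
  exists d2; split; [exact Hd2|]. intros y Jy Hy. apply H1; auto.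
Qed.

Lemma continuous_on_minus (J : R -> Prop) (g h : R -> R) :
  continuous_on J g -> continuous_on J h -> continuous_on J (fun x => g x - h x).
Proof.
  intros Hg Hh x Jx eps Heps.
  destruct (Hg x Jx (eps / 2)) as [d1 [Hd1 H1]]; [lra|].
  destruct (Hh x Jx (eps / 2)) as [d2 [Hd2 H2]]; [lra|].
  exists (Rmin d1 d2). split; [now apply Rmin_pos|].
  intros y Jy Hy.
  specialize (H1 y Jy (Rlt_le_trans _ _ _ Hy (Rmin_l d1 d2))).
  specialize (H2 y Jy (Rlt_le_trans _ _ _ Hy (Rmin_r d1 d2))).
  replace (g y - h y - (g x - h x)) with ((g y - g x) - (h y - h x)) by ring.
  eapply Rle_lt_trans; [apply Rabs_triang|]. rewrite Rabs_Ropp. lra.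
Qed.

Definition clamp (lo hi t : R) : R := Rmax lo (Rmin hi t).

Lemma clamp_between (lo hi t : R) : lo <= hi -> lo <= clamp lo hi t <= hi.
Proof. unfold clamp; intros; case_min_max; lra. Qed.

Lemma clamp_id (lo hi t : R) : lo <= t <= hi -> clamp lo hi t = t.
Proof. unfold clamp; intros; case_min_max; lra. Qed.

Lemma clamp_lipschitz (lo hi t s : R) :
  lo <= hi -> Rabs (clamp lo hi t - clamp lo hi s) <= Rabs (t - s).
Proof.
  intros Hlh. pose proof (Rle_abs (t - s)). pose proof (Rle_abs (- (t - s))).
  rewrite Rabs_Ropp in *. apply Rabs_le. unfold clamp; case_min_max; lra.
Qed.

(* Continuity is only known on J, so the IVT of the reals is applied to h
   precomposed with the clamp onto [Rmin x y, Rmax x y]. *)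
Lemma continuous_on_IVT (J : R -> Prop) (h : R -> R) (x y c : R) :
  is_interval J -> continuous_on J h -> J x -> J y -> (h x - c) * (h y - c) <= 0 ->
  exists z, J z /\ Rmin x y <= z <= Rmax x y /\ h z = c.
Proof.
  intros HI Hh Jx Jy Hsign.
  set (lo := Rmin x y). set (hi := Rmax x y).
  assert (Hlh : lo <= hi) by apply Rminmax.
  assert (Jclamp : forall t, J (clamp lo hi t)).
  { intro t. apply (is_interval_between J x y); auto. now apply clamp_between. }
  set (F := fun t => h (clamp lo hi t) - c).
  assert (HF : continuity F).
  { intro t0. unfold continuity_pt, continue_in, limit1_in, limit_in; simpl; unfold Rdist.
    intros eps Heps.
    destruct (Hh _ (Jclamp t0) eps Heps) as [d [Hd Hclose]].
    exists d. split; [exact Hd|]. intros t [_ Ht]. unfold F.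
    replace (h (clamp lo hi t) - c - (h (clamp lo hi t0) - c))
      with (h (clamp lo hi t) - h (clamp lo hi t0)) by ring.
    apply Hclose; [apply Jclamp|].
    eapply Rle_lt_trans; [apply clamp_lipschitz; exact Hlh | exact Ht]. }
  assert (Hends : F lo * F hi <= 0).
  { unfold F. rewrite !clamp_id by lra. unfold lo, hi; case_min_max; nra. }
  destruct (IVT_cor F lo hi HF Hlh Hends) as [z [Hz HFz]].
  exists z. unfold F in HFz. rewrite clamp_id in HFz by exact Hz.
  split; [|split; [exact Hz | lra]].
  rewrite <- (clamp_id lo hi z Hz). apply Jclamp.
Qed.

Lemma continuous_on_fixed_point (J : R -> Prop) (g : R -> R) (x y : R) :
  is_interval J -> continuous_on J g -> J x -> J y -> g x <= x -> y <= g y ->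
  exists z, J z /\ Rmin x y <= z <= Rmax x y /\ g z = z.
Proof.
  intros HI Hg Jx Jy Hx Hy.
  destruct (continuous_on_IVT J (fun t => g t - t) x y 0 HI) as [z [Jz [Hz Hgz]]];
    auto; [apply continuous_on_minus; auto using continuous_on_id | nra |].
  exists z. repeat split; auto; lra.
Qed.

Definition cont_surj_seq (J : R -> Prop) (f : nat -> R -> R) : Prop :=
  forall n, (1 <= n)%nat -> cont_surj_self_map J (f n).

Definition shift (f : nat -> R -> R) (a : nat) : nat -> R -> R :=
  fun k => f (a + k)%nat.

Lemma comp_add (f : nat -> R -> R) (a s : nat) (x : R) :
  comp f (a + s) x = comp (shift f a) s (comp f a x).
Proof.
  induction s as [|s IH]; simpl.
  - now rewrite Nat.add_0_r.
  - rewrite Nat.add_succ_r; simpl. rewrite IH. unfold shift. now rewrite Nat.add_succ_r.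
Qed.

Lemma cont_surj_seq_shift (J : R -> Prop) (f : nat -> R -> R) (a : nat) :
  cont_surj_seq J f -> cont_surj_seq J (shift f a).
Proof. intros Hf n Hn. apply Hf; lia. Qed.

Section Iterates.

Variables (J : R -> Prop) (f : nat -> R -> R).
Hypothesis Hf : cont_surj_seq J f.

Lemma comp_mapsto (n : nat) (x : R) : J x -> J (comp f n x).
Proof.
  intros Jx. induction n as [|n IH]; simpl; [exact Jx|].
  apply (Hf (S n)); [lia | exact IH].
Qed.

Lemma comp_continuous (n : nat) : continuous_on J (comp f n).
Proof.
  induction n as [|n IH]; [apply continuous_on_id|].
  change (continuous_on J (fun x => f (S n) (comp f n x))).
  apply continuous_on_comp; [apply (Hf (S n)); lia | exact IH | apply comp_mapsto].
Qed.

Lemma comp_surjective (n : nat) (y : R) : J y -> exists x, J x /\ comp f n x = y.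
Proof.
  revert y. induction n as [|n IH]; intros y Jy; [now exists y|].
  destruct (proj2 (proj2 (Hf (S n) ltac:(lia))) y Jy) as [w [Jw Hw]].
  destruct (IH w Jw) as [x [Jx Hx]].
  exists x. split; [exact Jx|]. simpl. now rewrite Hx.
Qed.

End Iterates.

Section Periodicity.

Variables (J : R -> Prop) (f : nat -> R -> R) (m : nat).
Hypotheses (Hf : cont_surj_seq J f) (Hper : periodic_seq J f m).

Lemma periodic_seq_mul (n j : nat) (x : R) :
  (1 <= n)%nat -> J x -> f (n + j * m)%nat x = f n x.
Proof.
  intros Hn Jx. induction j as [|j IH]; [now rewrite Nat.add_0_r|].
  replace (n + S j * m)%nat with (n + j * m + m)%nat by lia.
  rewrite (proj2 Hper); [exact IH | lia | exact Jx].
Qed.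

Lemma comp_shift_period (a j s : nat) (x : R) :
  J x -> comp (shift f (a + j * m)) s x = comp (shift f a) s x.
Proof.
  intros Jx. induction s as [|s IH]; [reflexivity|].
  cbn [comp]. rewrite IH. unfold shift at 1 3.
  replace (a + j * m + S s)%nat with (a + S s + j * m)%nat by lia.
  apply periodic_seq_mul; [lia|].
  apply comp_mapsto; [apply cont_surj_seq_shift, Hf | exact Jx].
Qed.

Lemma periodic_point_of_fixed (j : nat) (z : R) :
  (1 <= j)%nat -> J z -> comp f (j * m) z = z -> periodic_point J f z.
Proof.
  intros Hj Jz Hfix. split; [exact Jz|].
  exists (j * m)%nat. split; [pose proof (proj1 Hper); nia|].
  intros k _. induction k as [|k IH]; [now rewrite Nat.mul_0_r|].
  replace (j * m * S k)%nat with (j * m * k + j * m)%nat by lia.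
  rewrite comp_add, IH.
  replace (j * m * k)%nat with (0 + j * k * m)%nat by lia.
  rewrite comp_shift_period by exact Jz. exact Hfix.
Qed.

End Periodicity.

Definition inner_box (J : R -> Prop) (lo hi : R) : Prop :=
  exists w1 w2, J w1 /\ J w2 /\ w1 < lo /\ lo <= hi /\ hi < w2.

Section InnerBoxes.

Variable J : R -> Prop.
Hypothesis HI : is_interval J.

Lemma inner_box_hull (lo hi lo' hi' : R) :
  inner_box J lo hi -> inner_box J lo' hi' ->
  inner_box J (Rmin lo lo') (Rmax hi hi').
Proof.
  intros (w1 & w2 & J1 & J2 & Hw) (w1' & w2' & J1' & J2' & Hw').
  exists (Rmin w1 w1'), (Rmax w2 w2').
  split; [now apply Rmin_case|]. split; [now apply Rmax_case|].
  case_min_max; lra.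
Qed.

Lemma inner_box_cover (P : nat -> R -> Prop) (lo0 hi0 : R) (M : nat) :
  inner_box J lo0 hi0 ->
  (forall t, (t < M)%nat -> exists u, inner_box J u u /\ P t u) ->
  exists lo hi, inner_box J lo hi /\ lo <= lo0 /\ hi0 <= hi /\
    forall t, (t < M)%nat -> exists u, lo <= u <= hi /\ P t u.
Proof.
  intros Hbox0. induction M as [|M IH]; intros HP.
  - exists lo0, hi0. repeat split; auto; [lra | lra | intros; lia].
  - destruct IH as (lo & hi & Hbox & Hlo & Hhi & Hcov); [intros t Ht; apply HP; lia|].
    destruct (HP M ltac:(lia)) as (u & Hu & PMu).
    exists (Rmin lo u), (Rmax hi u).
    pose proof (Rmin_l lo u). pose proof (Rmin_r lo u).
    pose proof (Rmax_l hi u). pose proof (Rmax_r hi u).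
    split; [now apply inner_box_hull|]. split; [lra|]. split; [lra|].
    intros t Ht. destruct (Nat.eq_dec t M) as [->|HtM].
    + exists u. split; [lra | exact PMu].
    + destruct (Hcov t ltac:(lia)) as (v & Hv & Ptv). exists v. split; [lra | exact Ptv].
Qed.

Lemma preimage_inner (K : R -> R) (pl p ph : R) :
  continuous_on J K -> (forall y, J y -> exists x, J x /\ K x = y) ->
  J pl -> J ph -> pl < p < ph -> exists u, inner_box J u u /\ K u = p.
Proof.
  intros HK Hsurj Jpl Jph Hp.
  destruct (Hsurj pl Jpl) as (xl & Jxl & Hxl).
  destruct (Hsurj ph Jph) as (xh & Jxh & Hxh).
  destruct (continuous_on_IVT J K xl xh p HI HK Jxl Jxh) as (z & Jz & Hz & Kz);
    [rewrite Hxl, Hxh; nra|].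
  assert (z <> xl) by (intros ->; lra).
  assert (z <> xh) by (intros ->; lra).
  exists z. split; [|exact Kz].
  exists (Rmin xl xh), (Rmax xl xh).
  split; [now apply Rmin_case|]. split; [now apply Rmax_case|].
  case_min_max; lra.
Qed.

Lemma preimages_inner_box (K : nat -> R -> R) (M : nat) (p q : R) :
  (forall t, continuous_on J (K t)) ->
  (forall t y, J y -> exists x, J x /\ K t x = y) ->
  inner_box J p p -> inner_box J q q ->
  exists lo hi, inner_box J lo hi /\ forall t, (t < M)%nat ->
    exists u v, lo <= u <= hi /\ lo <= v <= hi /\ K t u = p /\ K t v = q.
Proof.
  intros HK Hsurj Hp Hq.
  assert (Hpre : forall r, inner_box J r r ->
            forall t, (t < M)%nat -> exists u, inner_box J u u /\ K t u = r).
  { intros r (wl & wh & Jwl & Jwh & Hw) t _.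
    apply (preimage_inner (K t) wl r wh); auto; lra. }
  destruct (inner_box_cover (fun t u => K t u = p) p p M Hp (Hpre p Hp))
    as (lo1 & hi1 & Hbox1 & _ & _ & Hcov1).
  destruct (inner_box_cover (fun t v => K t v = q) lo1 hi1 M Hbox1 (Hpre q Hq))
    as (lo & hi & Hbox & Hlo & Hhi & Hcov).
  exists lo, hi. split; [exact Hbox|].
  intros t Ht.
  destruct (Hcov1 t Ht) as (u & Hu & Ku). destruct (Hcov t Ht) as (v & Hv & Kv).
  exists u, v. repeat split; auto; lra.
Qed.

End InnerBoxes.

Lemma nonempty_open_in_contains_interval (J U : R -> Prop) :
  nondegenerate_interval J -> nonempty_open_in J U ->
  exists c d, c < d /\ forall y, c <= y <= d -> U y.
Proof.
  intros [HI (a & b & Ja & Jb & Hab)] [[HUJ HUopen] [x Ux]].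
  destruct (HUopen x Ux) as (eps & Heps & Hball).
  assert (Jx : J x) by auto.
  destruct (Rlt_dec x b) as [Hxb | Hxb].
  - set (r := Rmin eps (b - x) / 2).
    pose proof (Rmin_l eps (b - x)). pose proof (Rmin_pos eps (b - x) Heps ltac:(lra)).
    exists x, (x + r). split; [unfold r; lra|].
    intros y Hy. unfold r in Hy. pose proof (Rmin_r eps (b - x)).
    apply Hball; [apply (HI x b); auto; lra | apply Rabs_def1; lra].
  - set (r := Rmin eps (x - a) / 2).
    pose proof (Rmin_l eps (x - a)). pose proof (Rmin_pos eps (x - a) Heps ltac:(lra)).
    exists (x - r), x. split; [unfold r; lra|].
    intros y Hy. unfold r in Hy. pose proof (Rmin_r eps (x - a)).
    apply Hball; [apply (HI a x); auto; lra | apply Rabs_def1; lra].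
Qed.

Lemma top_transitive_of_weakly_mixing (J : R -> Prop) (f : nat -> R -> R) :
  weakly_mixing J f -> top_transitive J f.
Proof.
  intros Hwm U V HU HV.
  destruct (Hwm U U V V HU HU HV HV) as (n & Hn & Hhit & _). eauto.
Qed.

Lemma sensitive_of_weakly_mixing (J : R -> Prop) (f : nat -> R -> R) :
  nondegenerate_interval J -> weakly_mixing J f -> sensitive J f.
Proof.
  intros [_ (a & b & Ja & Jb & Hab)] Hwm.
  set (delta := (b - a) / 4).
  exists delta. split; [unfold delta; lra|].
  intros x Jx U [HUJ (W & HW & Wx & HWU)].
  assert (HWne : nonempty_open_in J W) by (split; [exact HW | now exists x]).
  destruct (Hwm W W _ _ HWne HWne
              (nonempty_open_in_interval J (a - delta) (a + delta) a Ja
                 ltac:(unfold delta; lra))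
              (nonempty_open_in_interval J (b - delta) (b + delta) b Jb
                 ltac:(unfold delta; lra)))
    as (n & Hn & (y1 & Wy1 & _ & Hy1) & (y2 & Wy2 & _ & Hy2)).
  destruct (Rgt_dec (Rabs (comp f n x - comp f n y1)) delta) as [Hfar | Hnear].
  - exists y1, n. auto.
  - exists y2, n. split; [auto|]. split; [exact Hn|].
    pose proof (Rle_abs (comp f n x - comp f n y1)).
    pose proof (Rle_abs (- (comp f n x - comp f n y2))) as Hy2'.
    rewrite Rabs_Ropp in Hy2'. unfold delta in *. lra.
Qed.

Section DensePeriodicPoints.

Variables (J : R -> Prop) (f : nat -> R -> R) (m : nat).
Hypotheses (HI : is_interval J) (Hf : cont_surj_seq J f)
  (Hper : periodic_seq J f m) (Hwm : weakly_mixing J f).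

Lemma weakly_mixing_straddles_box (A : R -> Prop) (lo hi : R) :
  nonempty_open_in J A -> inner_box J lo hi ->
  exists n, (1 <= n)%nat /\ exists y1 y2, A y1 /\ A y2 /\
    comp f n y1 < lo /\ hi < comp f n y2.
Proof.
  intros HA (wl & wh & Jwl & Jwh & Hwl & Hlh & Hwh).
  assert (Jlo : J lo) by (apply (HI wl wh); auto; lra).
  assert (Jhi : J hi) by (apply (HI wl wh); auto; lra).
  destruct (Hwm _ _ _ _ HA HA
              (nonempty_open_in_interval J wl lo ((wl + lo) / 2)
                 ltac:(apply (HI wl lo); auto; lra) ltac:(lra))
              (nonempty_open_in_interval J hi wh ((hi + wh) / 2)
                 ltac:(apply (HI hi wh); auto; lra) ltac:(lra)))
    as (n & Hn & (y1 & Ay1 & _ & Hlow) & (y2 & Ay2 & _ & Hhigh)).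
  exists n. split; [exact Hn|]. exists y1, y2. repeat split; auto; lra.
Qed.

(* [K t] is f_m o ... o f_(t+1): by periodicity it completes every orbit
   segment of length n = t (mod m) to one whose length is a multiple of m. *)
Lemma periodic_point_between (p1 p2 p3 p4 : R) :
  inner_box J p1 p1 -> inner_box J p4 p4 -> J p2 -> J p3 ->
  p1 < p2 -> p2 < p3 -> p3 < p4 ->
  exists z, p2 < z < p3 /\ periodic_point J f z.
Proof.
  intros Hp1 Hp4 J2 J3 H12 H23 H34.
  set (K := fun t => comp (shift f t) (m - t)).
  destruct (preimages_inner_box J HI K m p1 p4
              (fun t => comp_continuous J _ (cont_surj_seq_shift J f t Hf) (m - t))
              (fun t => comp_surjective J _ (cont_surj_seq_shift J f t Hf) (m - t))
              Hp1 Hp4)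
    as (lo & hi & Hbox & Hpre).
  assert (HA : nonempty_open_in J (fun y => J y /\ p2 < y < p3))
    by (apply (nonempty_open_in_interval J p2 p3 ((p2 + p3) / 2));
        [apply (HI p2 p3); auto; lra | lra]).
  destruct (weakly_mixing_straddles_box _ lo hi HA Hbox)
    as (n & Hn & y1 & y2 & [Jy1 Hy1] & [Jy2 Hy2] & Hlow & Hhigh).
  set (t := (n mod m)%nat). set (q := (n / m)%nat).
  assert (Hm : (1 <= m)%nat) by apply Hper.
  assert (Hnq : n = (t + q * m)%nat)
    by (unfold t, q; rewrite (Nat.div_mod n m) at 1 by lia; lia).
  assert (Ht : (t < m)%nat) by (apply Nat.mod_upper_bound; lia).
  clearbody t q.
  destruct (Hpre t Ht) as (u & v & Hu & Hv & Ku & Kv).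
  destruct (continuous_on_IVT J (comp f n) y1 y2 u HI (comp_continuous J f Hf n) Jy1 Jy2)
    as (z1 & Jz1 & Hz1 & Hnz1); [nra|].
  destruct (continuous_on_IVT J (comp f n) y1 y2 v HI (comp_continuous J f Hf n) Jy1 Jy2)
    as (z2 & Jz2 & Hz2 & Hnz2); [nra|].
  pose proof (Rmin_Rmax_between p2 p3 y1 y2 z1 Hy1 Hy2 Hz1) as Hz1'.
  pose proof (Rmin_Rmax_between p2 p3 y1 y2 z2 Hy1 Hy2 Hz2) as Hz2'.
  assert (Hcompletion : forall x, J x ->
            comp f ((q + 1) * m) x = K t (comp f n x)).
  { intros x Jx. replace ((q + 1) * m)%nat with (n + (m - t))%nat by lia.
    rewrite comp_add, Hnq. apply (comp_shift_period J f m Hf Hper).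
    rewrite <- Hnq. now apply comp_mapsto. }
  destruct (continuous_on_fixed_point J (comp f ((q + 1) * m)) z1 z2 HI
              (comp_continuous J f Hf _) Jz1 Jz2) as (z & Jz & Hz & Hfix).
  { rewrite Hcompletion, Hnz1, Ku by exact Jz1. lra. }
  { rewrite Hcompletion, Hnz2, Kv by exact Jz2. lra. }
  exists z. split.
  - exact (Rmin_Rmax_between p2 p3 z1 z2 z Hz1' Hz2' Hz).
  - apply (periodic_point_of_fixed J f m Hf Hper (q + 1)); auto; lia.
Qed.

End DensePeriodicPoints.

Lemma dense_periodic_points_of_weakly_mixing (J : R -> Prop) (f : nat -> R -> R) (m : nat) :
  nondegenerate_interval J -> cont_surj_seq J f -> periodic_seq J f m ->
  weakly_mixing J f -> dense_periodic_points J f.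
Proof.
  intros HJ Hf Hper Hwm U HU.
  destruct (nonempty_open_in_contains_interval J U HJ HU) as (c & d & Hcd & HcdU).
  set (e := (d - c) / 5).
  assert (Jp : forall i, 0 <= i <= 5 -> J (c + i * e)).
  { intros i Hi. apply (proj1 (proj1 HU)), HcdU. unfold e. nra. }
  destruct (periodic_point_between J f m (proj1 HJ) Hf Hper Hwm
              (c + 1 * e) (c + 2 * e) (c + 3 * e) (c + 4 * e))
    as (z & Hz & Hpz); try (apply Jp; lra); try (unfold e; lra).
  - exists (c + 0 * e), (c + 2 * e). repeat split; try (apply Jp; lra); unfold e; lra.
  - exists (c + 3 * e), (c + 5 * e). repeat split; try (apply Jp; lra); unfold e; lra.
  - exists z. split; [apply HcdU; unfold e in Hz; lra | exact Hpz].
Qed.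

Theorem mainTheorem16 (J : R -> Prop) (f : nat -> R -> R) (m : nat) :
  nondegenerate_interval J ->
  (forall n, (1 <= n)%nat -> cont_surj_self_map J (f n)) ->
  commutative_seq J f ->
  periodic_seq J f m ->
  weakly_mixing J f ->
  devaney_chaotic J f.
Proof.
  intros HJ Hf _ Hper Hwm.
  split; [|split].
  - now apply top_transitive_of_weakly_mixing.
  - now apply (dense_periodic_points_of_weakly_mixing J f m).
  - now apply sensitive_of_weakly_mixing.
Qed.
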